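(* Assume (A1)–(A3) and $\mu_u,\mu_v>0$. Let $E=(u,v)$ with $u,v\gg 0$ be a positive equilibrium of system (M), and let $J$ be the Jacobian of the right-hand side of (M) at $E$, i.e. $$J=\begin{pmatrix}\mu_uL+\mathrm{diag}(p_i-2u_i-cv_i) & -\mathrm{diag}(cu_i)\\ -\mathrm{diag}(bv_i) & \mu_vL+\mathrm{diag}(q_i-bu_i-2v_i)\end{pmatrix}.$$ Then the spectral bound $s(J)=\max\{\mathrm{Re}\,\lambda:\lambda\in\sigma(J)\}$ satisfies $s(J)<0$ (so $E$ is locally asymptotically stable), except in the case $bc=1$ and $w^*(\mu_u,p)=c\,w^*(\mu_v,q)$, in which case $s(J)=0$ ($E$ is linearly neutrally stable).
   Context: Let $n\ge2$ and $A=(a_{ij})_{n\times n}$ with $a_{ij}\ge 0$ for $i\ne j$. The connection matrix $L=(L_{ij})$ is given by $L_{ij}=a_{ij}$ for $i\ne j$ and $L_{ii}=-\sum_{k\ne i}a_{ki}$. System (M) is the two-species competition patch model $$u_i'=\mu_u\sum_{j=1}^nL_{ij}u_j+u_i(p_i-u_i-cv_i),\qquad v_i'=\mu_v\sum_{j=1}^nL_{ij}v_j+v_i(q_i-bu_i-v_i),\qquad i=1,\dots,n,$$ with $p=(p_i)$, $q=(q_i)$. The weighted digraph $\mathcal G$ associated with $A$ has vertex set $\{1,\dots,n\}$ and, for $i\ne j$, an arc $(i,j)$ iff $a_{ji}>0$, with weight $a_{ji}$. A cycle $\mathcal C$ is a list of distinct vertices $i_1,\dots,i_k$, $k\ge2$,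 with arcs $(i_m,i_{m+1})$, $m<k$, and $(i_k,i_1)$; $w(\mathcal C)$ is the product of its arc weights; $-\mathcal C$ is the cycle with all arcs reversed. $\mathcal G$ is cycle-balanced if for every cycle $\mathcal C$, $-\mathcal C$ is also a cycle of $\mathcal G$ and $w(\mathcal C)=w(-\mathcal C)$. Standing assumptions: (A1) $b,c>0$, $bc\le 1$, and $p_i,q_i>0$ for all $i$; (A2) $L$ is irreducible; (A3) $\mathcal G$ is cycle-balanced. For $\mu>0$ and $r\gg0$, $w^*(\mu,r)\gg0$ denotes the unique positive equilibrium of the single-species model $w_i'=\mu\sum_jL_{ij}w_j+w_i(r_i-w_i)$ (which exists and is globally asymptotically stable in $\mathbb R^n_+\setminus\{0\}$ when $L$ is irreducible). For vectors, $u\gg0$ means all entries positive. *)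

From mathcomp Require Import all_boot all_algebra complex reals.
Set Implicit Arguments. Unset Strict Implicit. Unset Printing Implicit Defensive.
Import GRing.Theory Num.Theory.
Local Open Scope ring_scope.

Section PatchModel.
Variables (R : realType) (n : nat).

Definition connL (A : 'M[R]_n) : 'M[R]_n :=
  \matrix_(i, j) (if i == j then - \sum_(k < n | k != i) A k i else A i j).

Definition offdiag_nonneg (A : 'M[R]_n) : Prop :=
  forall i j : 'I_n, i != j -> 0 <= A i j.

(* Irreducible matrix: there is no nonempty proper subset S of indices
   with M_ij = 0 for all i in S, j not in S (i.e. M is not permutation-similar
   to a block-triangular matrix). *)
Definition irreducible_mx (M : 'M[R]_n) : Prop :=
  ~ exists S : {set 'I_n}, [/\ S != set0, S != setT &
       forall i j, i \in S -> j \notin S -> M i j = 0].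

(* The weighted digraph G of A: arc (i,j) iff i <> j and a_ji > 0,
   with weight a_ji. *)
Definition arc (A : 'M[R]_n) : rel 'I_n := fun i j => (i != j) && (0 < A j i).

Definition is_graph_cycle (A : 'M[R]_n) (s : seq 'I_n) : bool :=
  [&& uniq s, (2 <= size s)%N & path.cycle (arc A) s].

Definition cycle_weight (A : 'M[R]_n) (s : seq 'I_n) : R :=
  \prod_(e <- zip s (rot 1 s)) A e.2 e.1.

(* -C is the cycle traversed backwards, i.e. the list rev s. *)
Definition cycle_balanced (A : 'M[R]_n) : Prop :=
  forall s, is_graph_cycle A s ->
    is_graph_cycle A (rev s) /\ cycle_weight A s = cycle_weight A (rev s).

Definition single_pos_equilibrium (L : 'M[R]_n) (mu : R) (r w : 'I_n -> R)
  : Prop :=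
  (forall i, 0 < w i) /\
  (forall i, mu * (\sum_j L i j * w j) + w i * (r i - w i) = 0).

Definition M_equilibrium (L : 'M[R]_n) (mu_u mu_v b c : R)
  (p q u v : 'I_n -> R) : Prop :=
  forall i,
    mu_u * (\sum_j L i j * u j) + u i * (p i - u i - c * v i) = 0 /\
    mu_v * (\sum_j L i j * v j) + v i * (q i - b * u i - v i) = 0.

Definition jacobianM (L : 'M[R]_n) (mu_u mu_v b c : R)
  (p q u v : 'I_n -> R) : 'M[R]_(n + n) :=
  block_mx
    (mu_u *: L + diag_mx (\row_i (p i - 2 * u i - c * v i)))
    (- diag_mx (\row_i (c * u i)))
    (- diag_mx (\row_i (b * v i)))
    (mu_v *: L + diag_mx (\row_i (q i - b * u i - 2 * v i))).

End PatchModel.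

Definition is_spectral_bound (R : realType) (m : nat) (J : 'M[R]_m) (s : R)
  : Prop :=
  (exists2 l : R[i], eigenvalue (map_mx (@real_complex R) J) l & complex.Re l = s)
  /\ (forall l : R[i], eigenvalue (map_mx (@real_complex R) J) l ->
        complex.Re l <= s).

(* Cycle balance makes every closed walk of the digraph weigh as much as its
   reversal, so along walks from a fixed root the ratio of reversed to forward
   weight defines th > 0 with th_i a_ij = th_j a_ji.  Against these weights L is
   symmetric and sum_i th_i W_i f_i sum_j L_ij W_j (xi_j - xi_i) is a Dirichlet
   form, nonpositive whenever f increases with xi.
   If (x, y) is an eigenvector of J for lam, Kato's inequality shows that
   r = |x| and t = |y| satisfy the linearised inequalities with rate Re lam and
   nonnegative coupling c u t, b v r.  Testing them against th r^2 / u and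
   c^3 th t^2 / v and using the equilibrium equations bounds Re lam times a
   positive mass by two Dirichlet forms plus th-weighted cubic defects
   -((r - c t)^2 (r + c t) + (1 - b c) c^2 r t^2), all nonpositive.  Hence
   Re lam <= 0, and Re lam = 0 forces r / u and t / v to be constant, r = c t
   and b c = 1, i.e. u is proportional to v.  Conversely, in that case (c u, -u)
   lies in the kernel of J, and proportionality of u and v is equivalent to
   w*(mu_u, p) = c w*(mu_v, q). *)

From Pilot Require Import Defs.
From mathcomp Require Import all_boot all_order all_algebra complex reals.
From mathcomp Require Import ring lra zify.
Import Order.TTheory GRing.Theory Num.Theory.
Local Open Scope complex_scope.
Local Open Scope ring_scope.
Set Implicit Arguments. Unset Strict Implicit.

Lemma sum_delta (K : pzSemiRingType) m (e : K) (f : 'I_m -> K) i :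
  \sum_j (e *+ (i == j)) * f j = e * f i.
Proof.
rewrite (bigD1 i) //= eqxx mulr1n big1 ?addr0 // => j ji.
by rewrite eq_sym (negbTE ji) mulr0n mul0r.
Qed.

Lemma sum_scale_delta (K : pzSemiRingType) m (k e : K) (f r : 'I_m -> K) i :
  \sum_j (k * f j + e *+ (i == j)) * r j = k * (\sum_j f j * r j) + e * r i.
Proof.
under eq_bigr do rewrite mulrDl -mulrA.
by rewrite big_split /= -mulr_sumr sum_delta.
Qed.

Lemma eigenvalue_trmx (F : fieldType) m (M : 'M[F]_m) a :
  eigenvalue M^T a = eigenvalue M a.
Proof.
symmetry; rewrite !eigenvalue_root_char /char_poly -det_tr /char_poly_mx.
by rewrite linearB /= tr_scalar_mx map_trmx.
Qed.

Lemma seq_argmax (T : eqType) (R : realDomainType) (f : T -> R) (s : seq T) :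
  s != [::] -> exists2 z, z \in s & forall w, w \in s -> f w <= f z.
Proof.
elim: s => [//|a [|b s] IH] _.
  by exists a; rewrite ?inE // => w; rewrite inE => /eqP ->.
have [z zs z_max] := IH isT.
have [az|za] := leP (f a) (f z).
  by exists z => [|w]; rewrite inE ?zs ?orbT // => /orP [/eqP ->|/z_max].
exists a => [|w]; first by rewrite inE eqxx.
by rewrite inE => /orP [/eqP ->//|/z_max wz]; apply: le_trans wz (ltW za).
Qed.

Lemma eigenvalue_max_Re (R : rcfType) m (M : 'M[R[i]]_m) : (0 < m)%N ->
  exists2 z, eigenvalue M z & forall l, eigenvalue M l -> complex.Re l <= complex.Re z.
Proof.
move=> m_gt0; have [rs char_rs] := closed_field_poly_normal (char_poly M).
rewrite (monicP (char_poly_monic M)) scale1r in char_rs.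
have eigE z : eigenvalue M z = (z \in rs).
  by rewrite eigenvalue_root_char char_rs root_prod_XsubC.
have : rs != [::].
  apply: contra_eqN (size_char_poly M) => /eqP rs0.
  by rewrite char_rs rs0 big_nil size_poly1; case: m m_gt0 {M char_rs eigE}.
case/(seq_argmax (fun z : R[i] => complex.Re z)) => z zs z_max.
by exists z => [|l]; rewrite eigE // => /z_max.
Qed.

Section ComplexModulus.
Variable R : rcfType.
Local Notation normc := (@Normc.normc R).

Lemma normc_ge0 (z : R[i]) : 0 <= normc z.
Proof. by case: z => a b /=; rewrite sqrtr_ge0. Qed.

Lemma normc_real (a : R) : normc a%:C = `|a|.
Proof. by rewrite /= expr0n /= addr0 sqrtr_sqr. Qed.

Lemma Re_le_normc (z : R[i]) : complex.Re z <= normc z.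
Proof.
case: z => a b /=; apply: le_trans (ler_norm a) _.
by rewrite -sqrtr_sqr ler_wsqrtr // lerDl sqr_ge0.
Qed.

Lemma normc_sum (I : finType) (P : pred I) (F : I -> R[i]) :
  normc (\sum_(i | P i) F i) <= \sum_(i | P i) normc (F i).
Proof.
elim/big_rec2: _ => [|j y1 y2 _ le_y]; first by rewrite Normc.normc0.
by apply: le_trans (le_normcD _ _) _; rewrite lerD2l.
Qed.

(* A row of Kato's inequality. *)
Lemma Re_mul_normc_le m (lam s : R[i]) (a : 'I_m -> R) (x : 'I_m -> R[i]) i :
  (forall j, j != i -> 0 <= a j) ->
  lam * x i = \sum_j (a j)%:C * x j + s ->
  complex.Re lam * normc (x i) <= \sum_j a j * normc (x j) + normc s.
Proof.
move=> a_ge0 row.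
have row' : (lam - (a i)%:C) * x i = \sum_(j | j != i) (a j)%:C * x j + s.
  by rewrite mulrBl row (bigD1 i) //=; ring.
have diag : (complex.Re lam - a i) * normc (x i) <= normc ((lam - (a i)%:C) * x i).
  rewrite Normc.normcM ler_wpM2r ?normc_ge0 //.
  by case: lam {row row'} => lr li; exact: (Re_le_normc ((lr - a i) +i* (li - 0))).
have off : normc (\sum_(j | j != i) (a j)%:C * x j + s) <=
    \sum_(j | j != i) a j * normc (x j) + normc s.
  apply: le_trans (le_normcD _ _) _; rewrite lerD2r.
  apply: le_trans (normc_sum _ _) _; apply: ler_sum => j ji.
  by rewrite Normc.normcM normc_real ger0_norm ?a_ge0.
rewrite (bigD1 i) //=; move: diag; rewrite row' => diag.
have := le_trans diag off; lra.
Qed.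

End ComplexModulus.

Lemma subr_sqr_mul_ge0 (R : realDomainType) (x y : R) : 0 <= x -> 0 <= y ->
  0 <= (y - x) * (y ^+ 2 - x ^+ 2).
Proof.
move=> x_ge0 y_ge0; have -> : (y - x) * (y ^+ 2 - x ^+ 2) = (y - x) ^+ 2 * (x + y) by ring.
by rewrite mulr_ge0 ?sqr_ge0 ?addr_ge0.
Qed.

Lemma subr_sqr_mul_eq0 (R : realDomainType) (x y : R) : 0 <= x -> 0 <= y ->
  (y - x) * (y ^+ 2 - x ^+ 2) = 0 -> x = y.
Proof.
move=> x_ge0 y_ge0; have -> : (y - x) * (y ^+ 2 - x ^+ 2) = (y - x) ^+ 2 * (x + y) by ring.
move/eqP; rewrite mulf_eq0 sqrf_eq0 subr_eq0 paddr_eq0 // => /orP [/eqP //|].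
by case/andP => /eqP -> /eqP ->.
Qed.

Definition cubic_defect (R : pzRingType) (b c r t : R) :=
  c * r ^+ 2 * t - r ^+ 3 + c ^+ 3 * (b * t ^+ 2 * r - t ^+ 3).

Lemma cubic_defectE (R : comPzRingType) (b c r t : R) : cubic_defect b c r t =
  - ((r - c * t) ^+ 2 * (r + c * t) + (1 - b * c) * c ^+ 2 * r * t ^+ 2).
Proof. by rewrite /cubic_defect; ring. Qed.

Section CubicDefect.
Variables (R : realDomainType) (b c r t : R).
Hypotheses (c_gt0 : 0 < c) (bc_le1 : b * c <= 1) (r_ge0 : 0 <= r) (t_ge0 : 0 <= t).

Let ct_ge0 : 0 <= c * t := mulr_ge0 (ltW c_gt0) t_ge0.
Let square_part_ge0 : 0 <= (r - c * t) ^+ 2 * (r + c * t) :=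
  mulr_ge0 (sqr_ge0 _) (addr_ge0 r_ge0 ct_ge0).
Let competition_part_ge0 : 0 <= (1 - b * c) * c ^+ 2 * r * t ^+ 2.
Proof.
have bc_ge0 : 0 <= 1 - b * c by rewrite subr_ge0.
exact: mulr_ge0 (mulr_ge0 (mulr_ge0 bc_ge0 (sqr_ge0 c)) r_ge0) (sqr_ge0 t).
Qed.

Lemma cubic_defect_le0 : cubic_defect b c r t <= 0.
Proof. by rewrite cubic_defectE oppr_le0 addr_ge0. Qed.

Lemma cubic_defect_eq0 : cubic_defect b c r t = 0 ->
  r = c * t /\ (t = 0 \/ b * c = 1).
Proof.
rewrite cubic_defectE => /eqP; rewrite oppr_eq0 paddr_eq0 //.
case/andP => /eqP square0 /eqP competition0.
have r_ct : r = c * t.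
  move/eqP: square0; rewrite mulf_eq0 sqrf_eq0 subr_eq0 paddr_eq0 //.
  by case/orP => [/eqP //|/andP [/eqP -> /eqP <-]].
split=> //; have [|t_neq0] := eqVneq t 0; [by left | right].
have ct3_neq0 : c ^+ 3 * t ^+ 3 != 0.
  by rewrite mulf_neq0 // expf_neq0 // gt_eqF.
have : (1 - b * c) * (c ^+ 3 * t ^+ 3) = 0 by rewrite -competition0 r_ct; ring.
by move/eqP; rewrite mulf_eq0 (negbTE ct3_neq0) orbF subr_eq0 => /eqP <-.
Qed.

End CubicDefect.

Lemma not_uniq_rcons_split (T : eqType) (s : seq T) : ~~ uniq s ->
  exists s1 z s2 s3, s = rcons s1 z ++ rcons s2 z ++ s3.
Proof.
elim: s => [|a s IH] //=; rewrite negb_and negbK => /orP [|/IH].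
  by case/splitPr => s2 s3; exists [::], a, s2, s3; rewrite /= cat_rcons.
by move=> [s1 [z [s2 [s3 ->]]]]; exists (a :: s1), z, s2, s3.
Qed.

Section BalancedGraph.
Variables (R : realType) (n : nat) (A : 'M[R]_n).
Hypothesis A_offdiag_ge0 : offdiag_nonneg A.
Hypothesis L_irr : irreducible_mx (connL A).
Hypothesis A_balanced : cycle_balanced A.

Local Notation arc := (Defs.arc A).

(* The arc [(i, j)] carries the weight [A j i]; [rev_walk_weight] weighs the
   walk [x :: s] with every arc reversed. *)
Fixpoint walk_weight (x : 'I_n) (s : seq 'I_n) : R :=
  if s is y :: s' then A y x * walk_weight y s' else 1.

Fixpoint rev_walk_weight (x : 'I_n) (s : seq 'I_n) : R :=
  if s is y :: s' then A x y * rev_walk_weight y s' else 1.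

Lemma walk_weight_cat x s1 s2 :
  walk_weight x (s1 ++ s2) = walk_weight x s1 * walk_weight (last x s1) s2.
Proof. by elim: s1 x => [|y s1 IH] x /=; rewrite ?mul1r // IH mulrA. Qed.

Lemma rev_walk_weight_cat x s1 s2 :
  rev_walk_weight x (s1 ++ s2) = rev_walk_weight x s1 * rev_walk_weight (last x s1) s2.
Proof. by elim: s1 x => [|y s1 IH] x /=; rewrite ?mul1r // IH mulrA. Qed.

Lemma walk_weight_rev_rcons x s y :
  walk_weight x (rcons (rev s) y) = rev_walk_weight y (rcons s x).
Proof.
elim: s y => [|z s IH] y /=; first by rewrite mulr1.
by rewrite rev_cons -cats1 walk_weight_cat -cats1 /= cats1 IH last_rcons mulr1 mulrC.
Qed.

Lemma cycle_weightE x s : cycle_weight A (x :: s) = walk_weight x s * A x (last x s).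
Proof.
rewrite /cycle_weight rot1_cons.
suff gen z : \prod_(e <- zip (x :: s) (rcons s z)) A e.2 e.1 =
    walk_weight x s * A z (last x s) by exact: gen.
elim: s x => [|y s IH] x /=; first by rewrite big_cons big_nil mulr1 mul1r.
by rewrite big_cons /= IH mulrA.
Qed.

Lemma walk_weight_gt0 x s : path arc x s -> 0 < walk_weight x s.
Proof.
elim: s x => [|y s IH] x /=; first by rewrite ltr01.
by case/andP => /andP [_ Ayx] /IH; apply: mulr_gt0.
Qed.

Lemma rev_walk_weight_ge0 x s : path arc x s -> 0 <= rev_walk_weight x s.
Proof.
elim: s x => [|y s IH] x /=; first by rewrite ler01.
by case/andP => /andP [xy _] /IH; apply: mulr_ge0; apply: A_offdiag_ge0.
Qed.

Lemma simple_closed_walk_balanced x s : uniq s -> path arc x s ->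
  last x s = x -> walk_weight x s = rev_walk_weight x s.
Proof.
case: s => [//|y s]; case/lastP: s => [|s z] s_uniq walk.
  by move=> /= yx; move: walk; rewrite /= yx /Defs.arc eqxx.
rewrite /= last_rcons => zx; subst z.
have cyc : is_graph_cycle A (y :: rcons s x).
  rewrite /is_graph_cycle s_uniq /= size_rcons /path.cycle rcons_path last_rcons.
  by move: walk => /= /andP [-> ->].
have [_] := A_balanced cyc.
rewrite cycle_weightE last_rcons rev_cons rev_rcons cycle_weightE.
rewrite -/(rcons (rev s) y) walk_weight_rev_rcons !last_rcons /= => eq_w.
by rewrite mulrC eq_w mulrC.
Qed.

Lemma closed_walk_balanced x s : path arc x s -> last x s = x ->
  walk_weight x s = rev_walk_weight x s.
Proof.
elim: {s}(size s).+1 {-2}s x (ltnSn (size s)) => // N IH s x size_s walk closed.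
have [s_uniq|] := boolP (uniq s); first exact: simple_closed_walk_balanced.
move=> /not_uniq_rcons_split [s1 [z [s2 [s3 s_eq]]]]; subst s.
move: walk closed size_s; rewrite !cat_path !last_cat !last_rcons !size_cat !size_rcons.
case/and3P => walk1 walk2 walk3 closed size_s.
have inner : walk_weight z (rcons s2 z) = rev_walk_weight z (rcons s2 z).
  by apply: IH; rewrite ?size_rcons ?last_rcons //; lia.
have outer : walk_weight x (rcons s1 z ++ s3) = rev_walk_weight x (rcons s1 z ++ s3).
  by apply: IH; rewrite ?size_cat ?size_rcons ?cat_path ?last_cat ?last_rcons ?walk1 //; lia.
move: outer; rewrite !walk_weight_cat !rev_walk_weight_cat !last_rcons inner => outer.
by rewrite mulrCA outer mulrCA.
Qed.

Lemma connL_offdiag i j : i != j -> connL A i j = A i j.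
Proof. by move=> ij; rewrite /connL mxE (negbTE ij). Qed.

Lemma irreducible_connect i j : connect arc i j.
Proof.
apply: contraT => not_ij; case: L_irr.
exists (~: [set k | connect arc i k]); split.
- by apply/set0Pn; exists j; rewrite !inE.
- by apply/eqP => /setP /(_ i); rewrite !inE connect0.
move=> k l; rewrite !inE negbK => not_ik il.
have kl : k != l by apply: contraNneq not_ik => ->.
rewrite connL_offdiag //; apply/eqP; apply: contraNT not_ik => Akl.
apply: connect_trans il (connect1 _).
by rewrite /Defs.arc eq_sym kl lt_def Akl A_offdiag_ge0.
Qed.

Lemma arc_invariant_const (T : Type) (f : 'I_n -> T) :
  (forall i j, arc i j -> f i = f j) -> forall i j, f i = f j.
Proof.
move=> f_arc i j; have /connectP [s walk ->] := irreducible_connect i j.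
by elim: s i walk => //= k s IH i /andP [/f_arc -> /IH].
Qed.

Lemma balanced_symmetrizer (r : 'I_n) : exists2 th : 'I_n -> R,
  forall i, 0 < th i & forall i j, th i * A i j = th j * A j i.
Proof.
have [out out_walk] : exists out : 'I_n -> seq 'I_n,
    forall k, path arc r (out k) /\ last r (out k) = k.
  apply: (@fin_all_exists _ _ (fun k s => path arc r s /\ last r s = k)) => k.
  by have /connectP [s ? ->] := irreducible_connect r k; exists s.
have [back back_walk] : exists back : 'I_n -> seq 'I_n,
    forall k, path arc k (back k) /\ last k (back k) = r.
  apply: (@fin_all_exists _ _ (fun k s => path arc k s /\ last k s = r)) => k.
  by have /connectP [s ? ->] := irreducible_connect k r; exists s.
(* [th k := B k / F k]; closing [out k] by [back k] shows it is also [F' k / B' k]. *)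
pose F k := walk_weight r (out k); pose B k := rev_walk_weight r (out k).
pose F' k := walk_weight k (back k); pose B' k := rev_walk_weight k (back k).
have round_trip k : F k * F' k = B k * B' k.
  have [o1 o2] := out_walk k; have [b1 b2] := back_walk k.
  have := @closed_walk_balanced r (out k ++ back k).
  rewrite cat_path last_cat o2 o1 b1 b2 walk_weight_cat rev_walk_weight_cat o2.
  exact.
have F_gt0 k : 0 < F k by apply: walk_weight_gt0; case: (out_walk k).
have F'_gt0 k : 0 < F' k by apply: walk_weight_gt0; case: (back_walk k).
have B'_neq0 k : B' k != 0.
  by apply: contra_eq_neq (round_trip k) => ->; rewrite mulr0 mulf_neq0 ?gt_eqF.
have B_gt0 k : 0 < B k.
  rewrite lt_def rev_walk_weight_ge0 ?andbT; last by case: (out_walk k).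
  by apply: contra_eq_neq (round_trip k) => ->; rewrite mul0r mulf_neq0 ?gt_eqF.
exists (fun k => B k / F k) => [k|]; first exact: divr_gt0.
have arc_sym i j : arc i j -> B i / F i * A i j = B j / F j * A j i.
  move=> ij; have [o1 o2] := out_walk i; have [b1 b2] := back_walk j.
  have e : F i * (A j i * F' j) = B i * (A i j * B' j).
    have := @closed_walk_balanced r (out i ++ j :: back j).
    rewrite cat_path last_cat o2 o1 /= ij b1 b2 walk_weight_cat rev_walk_weight_cat o2.
    exact.
  have thj : B j / F j = F' j / B' j.
    apply/eqP; rewrite eqr_div ?B'_neq0 ?(gt_eqF (F_gt0 _)) //.
    by rewrite -round_trip mulrC.
  rewrite thj mulrAC [_ / _ * _]mulrAC; apply/eqP.
  by rewrite eqr_div ?B'_neq0 ?(gt_eqF (F_gt0 _)) // -mulrA -e; apply/eqP; ring.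
move=> i j; have [->//|ij] := eqVneq i j.
have [Aji|] := ltP 0 (A j i); first by apply: arc_sym; rewrite /Defs.arc ij.
have [Aij|] := ltP 0 (A i j); first by symmetry; apply: arc_sym; rewrite /Defs.arc eq_sym ij.
move=> Aij Aji; have ji : j != i by rewrite eq_sym.
have -> : A i j = 0 by apply/eqP; rewrite eq_le Aij A_offdiag_ge0.
have -> : A j i = 0 by apply/eqP; rewrite eq_le Aji A_offdiag_ge0.
by rewrite !mulr0.
Qed.

End BalancedGraph.

Section DirichletForm.
Variables (R : realType) (n : nat) (A : 'M[R]_n) (th : 'I_n -> R).
Hypothesis A_offdiag_ge0 : offdiag_nonneg A.
Hypothesis th_gt0 : forall i, 0 < th i.
Hypothesis th_sym : forall i j, th i * A i j = th j * A j i.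

Local Notation L := (connL A).

Lemma th_connL_sym i j : th i * L i j = th j * L j i.
Proof.
have [->//|ij] := eqVneq i j.
by rewrite !connL_offdiag // eq_sym.
Qed.

Lemma th_connL_ge0 i j : i != j -> 0 <= th i * L i j.
Proof.
by move=> ij; rewrite connL_offdiag //; apply: mulr_ge0; [apply: ltW | apply: A_offdiag_ge0].
Qed.

Definition dirichlet (W xi f : 'I_n -> R) : R :=
  \sum_i th i * W i * f i * (\sum_j L i j * W j * (xi j - xi i)).

Lemma dirichlet_sym W xi f : dirichlet W xi f *+ 2 =
  - \sum_i \sum_j th i * L i j * W i * W j * ((xi j - xi i) * (f j - f i)).
Proof.
pose G i j := th i * L i j * W i * W j * (xi j - xi i) * f i.
have -> : dirichlet W xi f = \sum_i \sum_j G i j.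
  by apply: eq_bigr => i _; rewrite mulr_sumr; apply: eq_bigr => j _; rewrite /G; ring.
rewrite mulr2n {2}exchange_big -big_split -sumrN; apply: eq_bigr => i _.
rewrite -big_split -sumrN; apply: eq_bigr => j _; rewrite /G /= -(th_connL_sym i j).
ring.
Qed.

Lemma dirichlet_le0 W xi f : (forall i, 0 <= W i) ->
  (forall i j, 0 <= (xi j - xi i) * (f j - f i)) -> dirichlet W xi f <= 0.
Proof.
move=> W_ge0 f_mono.
suff : 0 <= - (dirichlet W xi f *+ 2) by rewrite mulr2n; lra.
rewrite dirichlet_sym opprK; apply: sumr_ge0 => i _; apply: sumr_ge0 => j _.
have [->|ij] := eqVneq i j; first by rewrite subrr !mul0r mulr0.
apply: mulr_ge0 (f_mono i j); apply: mulr_ge0 (W_ge0 j).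
exact: mulr_ge0 (th_connL_ge0 ij) (W_ge0 i).
Qed.

Lemma dirichlet_eq0_arc W xi f : (forall i, 0 < W i) ->
  (forall i j, 0 <= (xi j - xi i) * (f j - f i)) -> dirichlet W xi f = 0 ->
  forall i j, Defs.arc A i j -> (xi j - xi i) * (f j - f i) = 0.
Proof.
move=> W_gt0 f_mono D0 i j /andP [ij Aji].
pose T k l := th k * L k l * W k * W l * ((xi l - xi k) * (f l - f k)).
have T_ge0 k l : 0 <= T k l.
  have [->|kl] := eqVneq k l; first by rewrite /T subrr !mul0r mulr0.
  apply: mulr_ge0 (f_mono k l); apply: mulr_ge0 (ltW (W_gt0 l)).
  exact: mulr_ge0 (th_connL_ge0 kl) (ltW (W_gt0 k)).
have T_sum0 : \sum_k \sum_l T k l = 0.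
  by apply/eqP; rewrite -oppr_eq0 -dirichlet_sym D0 mul0rn.
have row_j0 := psumr_eq0P (fun k _ => sumr_ge0 _ (fun l _ => T_ge0 k l)) T_sum0 (i := j) isT.
have /eqP := psumr_eq0P (fun l _ => T_ge0 j l) row_j0 (i := i) isT.
have ji : j != i by rewrite eq_sym.
rewrite /T; have -> : (xi i - xi j) * (f i - f j) = (xi j - xi i) * (f j - f i) by ring.
have pos : 0 < th j * L j i * W j * W i by rewrite connL_offdiag // !mulr_gt0.
by rewrite mulf_eq0 (gt_eqF pos) => /eqP.
Qed.

Lemma dirichlet_const W xi k : dirichlet W xi (fun=> k) = 0.
Proof.
have := dirichlet_sym W xi (fun=> k).
rewrite big1 => [|i _]; last by rewrite big1 // => j _; rewrite subrr !mulr0.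
by rewrite oppr0 mulr2n; lra.
Qed.

Lemma sum_ratio_diff (w z : 'I_n -> R) i : (forall k, w k != 0) ->
  \sum_j L i j * w j * (z j / w j - z i / w i) =
  \sum_j L i j * z j - z i / w i * \sum_j L i j * w j.
Proof.
move=> w_neq0; rewrite mulr_sumr -sumrB; apply: eq_bigr => j _.
by field; rewrite !w_neq0.
Qed.

Lemma equilibrium_ratio_flux (m : R) (w z g h : 'I_n -> R) i :
  (forall k, w k != 0) ->
  m * (\sum_j L i j * w j) + w i * (g i - w i) = 0 ->
  m * (\sum_j L i j * z j) + z i * (g i - h i) = 0 ->
  m * (\sum_j L i j * w j * (z j / w j - z i / w i)) = z i * (h i - w i).
Proof.
move=> w_neq0 w_eq z_eq; rewrite sum_ratio_diff //.
transitivity (m * (\sum_j L i j * z j) + z i * (g i - h i)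
    - z i / w i * (m * (\sum_j L i j * w j) + w i * (g i - w i)) + z i * (h i - w i)).
  by field; rewrite w_neq0.
by rewrite z_eq w_eq mulr0 subr0 add0r.
Qed.

Lemma subsolution_cube_bound (m e sg : R) (w g r t : 'I_n -> R) :
  (forall i, 0 < w i) -> (forall i, 0 <= r i) ->
  (forall i, m * (\sum_j L i j * w j) + w i * g i = 0) ->
  (forall i, sg * r i <= m * (\sum_j L i j * r j) + (g i - w i) * r i + e * w i * t i) ->
  sg * (\sum_i th i * (r i ^+ 3 / w i)) <=
  m * dirichlet w (fun i => r i / w i) (fun i => (r i / w i) ^+ 2)
  + \sum_i th i * (e * r i ^+ 2 * t i - r i ^+ 3).
Proof.
move=> w_gt0 r_ge0 w_eq r_sub.
(* Multiply the [i]-th inequality by [th i * r i ^+ 2 / w i] and sum. *)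
have w_neq0 k : w k != 0 by rewrite gt_eqF.
rewrite /dirichlet mulr_sumr [m * _]mulr_sumr -big_split /=; apply: ler_sum => i _.
rewrite sum_ratio_diff //.
have weight_ge0 : 0 <= th i * (r i ^+ 2 / w i).
  by apply: mulr_ge0 (ltW (th_gt0 i)) (divr_ge0 (sqr_ge0 _) (ltW (w_gt0 i))).
have -> : sg * (th i * (r i ^+ 3 / w i)) = th i * (r i ^+ 2 / w i) * (sg * r i).
  by field; rewrite w_neq0.
set rhs := (X in _ <= X).
have -> : rhs = th i * (r i ^+ 2 / w i) * (m * (\sum_j L i j * r j) + (g i - w i) * r i
    + e * w i * t i) - th i * (r i ^+ 3 / w i ^+ 2) * (m * (\sum_j L i j * w j) + w i * g i).
  by rewrite /rhs; field; rewrite w_neq0.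
by rewrite w_eq mulr0 subr0 ler_wpM2l.
Qed.

Hypothesis L_irr : irreducible_mx L.

Lemma dirichlet_eq0_const W xi f : (forall i, 0 < W i) ->
  (forall i j, 0 <= (xi j - xi i) * (f j - f i)) ->
  (forall i j, (xi j - xi i) * (f j - f i) = 0 -> xi i = xi j) ->
  dirichlet W xi f = 0 -> forall i j, xi i = xi j.
Proof.
move=> W_gt0 f_mono f_inj D0; apply: (arc_invariant_const A_offdiag_ge0 L_irr).
by move=> i j ij; apply: f_inj; exact: dirichlet_eq0_arc W_gt0 f_mono D0 i j ij.
Qed.

Lemma ratio_dirichlet_eq0 (w r : 'I_n -> R) :
  (forall i, 0 < w i) -> (forall i, 0 <= r i) ->
  dirichlet w (fun i => r i / w i) (fun i => (r i / w i) ^+ 2) = 0 ->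
  forall i j, r i / w i = r j / w j.
Proof.
move=> w_gt0 r_ge0 D0.
have ratio_ge0 k : 0 <= r k / w k by apply: divr_ge0 (r_ge0 k) (ltW (w_gt0 k)).
apply: dirichlet_eq0_const w_gt0 _ _ D0 => i j; first exact: subr_sqr_mul_ge0.
exact: subr_sqr_mul_eq0.
Qed.

End DirichletForm.

Section TwoSpecies.
Variables (R : realType) (n : nat) (A : 'M[R]_n) (th : 'I_n -> R).
Variables (b c mu_u mu_v : R) (p q u v : 'I_n -> R).
Hypothesis A_offdiag_ge0 : offdiag_nonneg A.
Hypothesis th_gt0 : forall i, 0 < th i.
Hypothesis th_sym : forall i j, th i * A i j = th j * A j i.
Hypothesis L_irr : irreducible_mx (connL A).
Hypotheses (b_gt0 : 0 < b) (c_gt0 : 0 < c) (bc_le1 : b * c <= 1).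
Hypotheses (mu_u_gt0 : 0 < mu_u) (mu_v_gt0 : 0 < mu_v).
Hypotheses (u_gt0 : forall i, 0 < u i) (v_gt0 : forall i, 0 < v i).
Hypothesis uv_eq : M_equilibrium (connL A) mu_u mu_v b c p q u v.

Local Notation L := (connL A).

Let u_eq i : mu_u * (\sum_j L i j * u j) + u i * (p i - u i - c * v i) = 0.
Proof. by case: (uv_eq i). Qed.
Let v_eq i : mu_v * (\sum_j L i j * v j) + v i * (q i - b * u i - v i) = 0.
Proof. by case: (uv_eq i). Qed.

(* The moduli of the two halves of an eigenvector of the Jacobian for [lam] form
   such a pair with [sg = Re lam], see [eigenvalue_comparison]. *)
Definition comparison_subsolution (sg : R) (r t : 'I_n -> R) : Prop :=
  [/\ forall i, 0 <= r i, forall i, 0 <= t i,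
      exists i, r i != 0 \/ t i != 0,
      forall i, sg * r i <= mu_u * (\sum_j L i j * r j)
                + (p i - 2 * u i - c * v i) * r i + c * u i * t i &
      forall i, sg * t i <= mu_v * (\sum_j L i j * t j)
                + (q i - b * u i - 2 * v i) * t i + b * v i * r i].

Definition cube_mass (W r : 'I_n -> R) := \sum_i th i * (r i ^+ 3 / W i).
Definition ratio_form (W r : 'I_n -> R) :=
  dirichlet A th W (fun i => r i / W i) (fun i => (r i / W i) ^+ 2).

Lemma comparison_energy sg r t : comparison_subsolution sg r t ->
  sg * (cube_mass u r + c ^+ 3 * cube_mass v t) <=
  mu_u * ratio_form u r + c ^+ 3 * (mu_v * ratio_form v t)
  + \sum_i th i * cubic_defect b c (r i) (t i).
Proof.
case=> r_ge0 t_ge0 _ r_sub t_sub.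
have r_bound : sg * cube_mass u r <=
    mu_u * ratio_form u r + \sum_i th i * (c * r i ^+ 2 * t i - r i ^+ 3).
  apply: (subsolution_cube_bound th_gt0 u_gt0 r_ge0 u_eq) => i.
  by have -> : p i - u i - c * v i - u i = p i - 2 * u i - c * v i by ring.
have t_bound : sg * cube_mass v t <=
    mu_v * ratio_form v t + \sum_i th i * (b * t i ^+ 2 * r i - t i ^+ 3).
  apply: (subsolution_cube_bound th_gt0 v_gt0 t_ge0 v_eq) => i.
  by have -> : q i - b * u i - v i - v i = q i - b * u i - 2 * v i by ring.
have := ler_wpM2l (exprn_ge0 3 (ltW c_gt0)) t_bound.
have -> : \sum_i th i * cubic_defect b c (r i) (t i) =
    \sum_i th i * (c * r i ^+ 2 * t i - r i ^+ 3)
    + c ^+ 3 * \sum_i th i * (b * t i ^+ 2 * r i - t i ^+ 3).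
  by rewrite mulr_sumr -big_split; apply: eq_bigr => i _ /=; rewrite /cubic_defect; ring.
rewrite mulrDr mulrCA !mulrDr; lra.
Qed.

Lemma cube_mass_ge0 W r : (forall i, 0 < W i) -> (forall i, 0 <= r i) ->
  0 <= cube_mass W r.
Proof.
move=> W_gt0 r_ge0; apply: sumr_ge0 => i _.
by apply: mulr_ge0 (ltW (th_gt0 i)) (divr_ge0 (exprn_ge0 3 (r_ge0 i)) (ltW (W_gt0 i))).
Qed.

Lemma cube_mass_gt0 W r i : (forall i, 0 < W i) -> (forall i, 0 <= r i) ->
  r i != 0 -> 0 < cube_mass W r.
Proof.
move=> W_gt0 r_ge0 ri; rewrite /cube_mass (bigD1 i) //= ltr_pwDl ?sumr_ge0 //.
  by rewrite mulr_gt0 // divr_gt0 // exprn_gt0 // lt_def ri r_ge0.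
move=> k _; apply: mulr_ge0 (ltW (th_gt0 k)) _.
exact: divr_ge0 (exprn_ge0 3 (r_ge0 k)) (ltW (W_gt0 k)).
Qed.

Lemma ratio_form_le0 W r : (forall i, 0 < W i) -> (forall i, 0 <= r i) ->
  ratio_form W r <= 0.
Proof.
move=> W_gt0 r_ge0; apply: (dirichlet_le0 A_offdiag_ge0 th_gt0 th_sym) => [i|i j].
  exact: ltW.
by apply: subr_sqr_mul_ge0; apply: divr_ge0 (r_ge0 _) (ltW (W_gt0 _)).
Qed.

Section Comparison.
Variables (sg : R) (r t : 'I_n -> R).
Hypothesis sub : comparison_subsolution sg r t.

Let r_ge0 : forall i, 0 <= r i. Proof. by case: sub. Qed.
Let t_ge0 : forall i, 0 <= t i. Proof. by case: sub. Qed.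

Let th_defect_le0 i : th i * cubic_defect b c (r i) (t i) <= 0.
Proof. exact: mulr_ge0_le0 (ltW (th_gt0 i)) (cubic_defect_le0 c_gt0 bc_le1 _ _). Qed.

Let defect_le0 : \sum_i th i * cubic_defect b c (r i) (t i) <= 0.
Proof. exact: sumr_le0. Qed.

Let u_form_le0 : mu_u * ratio_form u r <= 0.
Proof. by rewrite pmulr_rle0 // ratio_form_le0. Qed.

Let v_form_le0 : c ^+ 3 * (mu_v * ratio_form v t) <= 0.
Proof. by rewrite pmulr_rle0 ?exprn_gt0 // pmulr_rle0 // ratio_form_le0. Qed.

Let defect_sum_eq0 : \sum_i th i * cubic_defect b c (r i) (t i) = 0 ->
  forall i, r i = c * t i /\ (t i = 0 \/ b * c = 1).
Proof.
move=> defect0 i; apply: (cubic_defect_eq0 c_gt0 bc_le1 (r_ge0 i) (t_ge0 i)).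
have th_defect0 : \sum_i - (th i * cubic_defect b c (r i) (t i)) = 0.
  by rewrite sumrN defect0 oppr0.
have th_defect_ge0 k : true -> 0 <= - (th k * cubic_defect b c (r k) (t k)).
  by rewrite oppr_ge0.
have /eqP := psumr_eq0P th_defect_ge0 th_defect0 (i := i) isT.
by rewrite oppr_eq0 mulf_eq0 (gt_eqF (th_gt0 i)) => /eqP.
Qed.

Lemma comparison_rate_le0 : sg <= 0.
Proof.
have mass_gt0 : 0 < cube_mass u r + c ^+ 3 * cube_mass v t.
  have u_mass := cube_mass_ge0 u_gt0 r_ge0; have v_mass := cube_mass_ge0 v_gt0 t_ge0.
  have c3_gt0 : 0 < c ^+ 3 := exprn_gt0 3 c_gt0.
  have [_ _ [i [ri|ti]] _ _] := sub.
    by have := cube_mass_gt0 u_gt0 r_ge0 ri; nra.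
  by have := cube_mass_gt0 v_gt0 t_ge0 ti; nra.
have := comparison_energy sub; have := u_form_le0; have := v_form_le0.
have := defect_le0; nra.
Qed.

Lemma neutral_comparison_proportional : sg = 0 ->
  b * c = 1 /\ exists2 k, 0 < k & forall i, u i = k * v i.
Proof.
move=> sg0; have := comparison_energy sub; rewrite sg0 mul0r => energy.
have uf := u_form_le0; have vf := v_form_le0; have df := defect_le0.
have [u_form0 v_form0 defect0] : [/\ mu_u * ratio_form u r = 0,
    c ^+ 3 * (mu_v * ratio_form v t) = 0 &
    \sum_i th i * cubic_defect b c (r i) (t i) = 0].
  by split; lra.
have r_ratio := ratio_dirichlet_eq0 A_offdiag_ge0 th_gt0 th_sym L_irr u_gt0 r_ge0.
have t_ratio := ratio_dirichlet_eq0 A_offdiag_ge0 th_gt0 th_sym L_irr v_gt0 t_ge0.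
move/eqP: u_form0; rewrite mulf_eq0 (gt_eqF mu_u_gt0) => /eqP /r_ratio {}r_ratio.
move/eqP: v_form0; rewrite mulf_eq0 expf_eq0 mulf_eq0 (gt_eqF mu_v_gt0) (gt_eqF c_gt0) /=.
move=> /eqP /t_ratio {}t_ratio.
have defect_eq0 := defect_sum_eq0 defect0.
have [_ _ [i0 rt_i0] _ _] := sub.
have t_i0 : 0 < t i0.
  rewrite lt_def t_ge0 andbT; case: rt_i0 => //; apply: contraNneq => ti0.
  by have [-> _] := defect_eq0 i0; rewrite ti0 mulr0.
have [r_ct [/eqP|bc1]] := defect_eq0 i0; first by rewrite gt_eqF.
split=> //; exists (u i0 / v i0) => [|i]; first by rewrite divr_gt0.
have [ri _] := defect_eq0 i; have := r_ratio i i0; rewrite ri r_ct => r_ratio_i.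
have t_i : t i = t i0 / v i0 * v i by rewrite -(t_ratio i i0) divfK ?gt_eqF.
have t_i_gt0 : 0 < t i by rewrite t_i !mulr_gt0 ?invr_gt0.
have u_i : u i = c * t i / (c * t i0 / u i0).
  by rewrite -r_ratio_i invfM invrK mulrA mulfV ?mul1r // mulf_neq0 ?gt_eqF.
by rewrite u_i t_i; field; rewrite !gt_eqF.
Qed.

End Comparison.

Section SpecialCase.
Variables wu wv : 'I_n -> R.
Hypothesis bc1 : b * c = 1.
Hypothesis wu_eq : single_pos_equilibrium L mu_u p wu.
Hypothesis wv_eq : single_pos_equilibrium L mu_v q wv.
Hypothesis wu_wv : forall i, wu i = c * wv i.

Let wu_gt0 i : 0 < wu i. Proof. by case: wu_eq. Qed.
Let wv_gt0 i : 0 < wv i. Proof. by case: wv_eq. Qed.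
Let xi i := u i / wu i.
Let eta i := v i / wv i.
(* [rho i = 0] says that [(u i, v i)] is a convex combination of [(wu i, 0)] and
   [(0, wv i)]. *)
Let rho i := xi i + eta i - 1.

Let u_flux i : mu_u * (\sum_j L i j * wu j * (xi j - xi i)) = u i * wu i * rho i.
Proof.
rewrite (equilibrium_ratio_flux (h := fun i => u i + c * v i) _ (proj2 wu_eq i)).
- by rewrite /rho /xi /eta wu_wv; field; rewrite !gt_eqF.
- by move=> k; rewrite gt_eqF.
by rewrite opprD addrA u_eq.
Qed.

Let v_flux i : mu_v * (\sum_j L i j * wv j * (eta j - eta i)) = v i * wv i * rho i.
Proof.
rewrite (equilibrium_ratio_flux (h := fun i => b * u i + v i) _ (proj2 wv_eq i)).
- rewrite /rho /xi /eta wu_wv.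
  have -> : b = c^-1 by rewrite -[c^-1]mul1r -bc1 mulfK // gt_eqF.
  by field; rewrite !gt_eqF.
- by move=> k; rewrite gt_eqF.
by rewrite opprD addrA v_eq.
Qed.

Let xi_gt0 i : 0 < xi i. Proof. by rewrite divr_gt0. Qed.

Let u_mass0 : \sum_i th i * wu i * (u i * wu i * rho i) = 0.
Proof.
transitivity (mu_u * dirichlet A th wu xi (fun=> 1)).
  by rewrite /dirichlet mulr_sumr; apply: eq_bigr => k _; rewrite -u_flux; ring.
by rewrite dirichlet_const // mulr0.
Qed.

Let v_mass0 : \sum_i th i * wv i * (v i * wv i * rho i) = 0.
Proof.
transitivity (mu_v * dirichlet A th wv eta (fun=> 1)).
  by rewrite /dirichlet mulr_sumr; apply: eq_bigr => k _; rewrite -v_flux; ring.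
by rewrite dirichlet_const // mulr0.
Qed.

Let rho_mass_ge0 : 0 <= \sum_i th i * wu i ^+ 3 * rho i.
Proof.
have : mu_u * dirichlet A th wu xi (fun i => - (xi i)^-1) <= 0.
  rewrite pmulr_rle0 // (dirichlet_le0 A_offdiag_ge0 th_gt0 th_sym) // => [k|k l].
    exact: ltW.
  have -> : (xi l - xi k) * (- (xi l)^-1 - - (xi k)^-1) = (xi l - xi k) ^+ 2 / (xi k * xi l).
    by field; rewrite !gt_eqF.
  by rewrite divr_ge0 ?sqr_ge0 // ltW // mulr_gt0.
rewrite /dirichlet mulr_sumr (eq_bigr (fun i => - (th i * wu i ^+ 3 * rho i))).
  by rewrite sumrN oppr_le0.
by move=> k _; rewrite mulrCA u_flux /xi; field; rewrite !gt_eqF.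
Qed.

Let rho_eq0 i : rho i = 0.
Proof.
have rho_sq_mass : \sum_i th i * wu i ^+ 3 * rho i ^+ 2 =
    \sum_i th i * wu i * (u i * wu i * rho i)
    + c ^+ 3 * \sum_i th i * wv i * (v i * wv i * rho i)
    - \sum_i th i * wu i ^+ 3 * rho i.
  rewrite mulr_sumr -big_split -sumrB; apply: eq_bigr => k _ /=.
  by rewrite /rho /xi /eta wu_wv; field; rewrite !gt_eqF.
rewrite u_mass0 v_mass0 mulr0 add0r sub0r in rho_sq_mass.
have term_ge0 k : 0 <= th k * wu k ^+ 3 * rho k ^+ 2.
  by rewrite mulr_ge0 ?sqr_ge0 // mulr_ge0 ?exprn_ge0 // ltW.
have mass0 : \sum_i th i * wu i ^+ 3 * rho i ^+ 2 = 0.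
  by apply/eqP; rewrite eq_le rho_sq_mass oppr_le0 rho_mass_ge0 -rho_sq_mass sumr_ge0.
have /eqP := psumr_eq0P (fun k _ => term_ge0 k) mass0 (i := i) isT.
rewrite mulf_eq0 sqrf_eq0 mulf_eq0 expf_eq0 (gt_eqF (th_gt0 i)) (gt_eqF (wu_gt0 i)).
by move/eqP.
Qed.

Lemma special_case_proportional (i0 : 'I_n) :
  exists2 k, 0 < k & forall i, u i = k * v i.
Proof.
have xi_const : forall i j, xi i = xi j.
  apply: (dirichlet_eq0_const A_offdiag_ge0 th_gt0 th_sym L_irr (f := xi) wu_gt0).
  - by move=> i j; rewrite -expr2 sqr_ge0.
  - by move=> i j /eqP; rewrite mulf_eq0 orbb subr_eq0 => /eqP.
  rewrite /dirichlet big1 // => i _.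
  have /eqP : mu_u * (\sum_j L i j * wu j * (xi j - xi i)) = 0.
    by rewrite u_flux rho_eq0 mulr0.
  by rewrite mulf_eq0 (gt_eqF mu_u_gt0) => /eqP ->; rewrite mulr0.
have eta_xi i : eta i = 1 - xi i0.
  by rewrite -(xi_const i i0); move: (rho_eq0 i); rewrite /rho; lra.
have xi0_lt1 : 0 < 1 - xi i0 by rewrite -(eta_xi i0); exact: divr_gt0.
exists (xi i0 * c / (1 - xi i0)) => [|i]; first exact: divr_gt0 (mulr_gt0 _ c_gt0) _.
have -> : u i = xi i0 * wu i by rewrite -(xi_const i i0) /xi divfK ?gt_eqF.
have -> : v i = (1 - xi i0) * wv i by rewrite -(eta_xi i) /eta divfK ?gt_eqF.
by rewrite wu_wv; field; rewrite gt_eqF.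
Qed.

End SpecialCase.

Lemma scaled_single_equilibrium (m s : R) (r w : 'I_n -> R) :
  0 < s -> (forall i, 0 < w i) ->
  (forall i, m * (\sum_j L i j * w j) + w i * (r i - s * w i) = 0) ->
  single_pos_equilibrium L m r (fun i => s * w i).
Proof.
move=> s_gt0 w_gt0 w_eq; split=> i; first exact: mulr_gt0.
have -> : \sum_j L i j * (s * w j) = s * \sum_j L i j * w j.
  by rewrite mulr_sumr; apply: eq_bigr => j _; rewrite mulrCA.
transitivity (s * (m * (\sum_j L i j * w j) + w i * (r i - s * w i))); first ring.
by rewrite w_eq mulr0.
Qed.

Lemma proportional_special_case (k : R) : b * c = 1 -> 0 < k ->
  (forall i, u i = k * v i) ->
  exists wu wv : 'I_n -> R, [/\ single_pos_equilibrium L mu_u p wu,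
    single_pos_equilibrium L mu_v q wv & forall i, wu i = c * wv i].
Proof.
move=> bc1 k_gt0 u_kv.
have Lu i : \sum_j L i j * u j = k * \sum_j L i j * v j.
  by rewrite mulr_sumr; apply: eq_bigr => j _; rewrite u_kv mulrCA.
exists (fun i => (k + c) * v i), (fun i => (1 + b * k) * v i); split.
- apply: scaled_single_equilibrium => // [|i]; first exact: addr_gt0.
  transitivity (k^-1 * (mu_u * (\sum_j L i j * u j) + u i * (p i - u i - c * v i))).
    by rewrite Lu u_kv; field; rewrite gt_eqF.
  by rewrite u_eq mulr0.
- apply: scaled_single_equilibrium => // [|i]; first by rewrite addr_gt0 ?mulr_gt0.
  transitivity (mu_v * (\sum_j L i j * v j) + v i * (q i - b * u i - v i)).
    by rewrite u_kv; ring.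
  exact: v_eq.
have bck : b * c * k = k by rewrite bc1 mul1r.
by move=> i; rewrite -{1}bck; ring.
Qed.

Local Notation J := (jacobianM L mu_u mu_v b c p q u v).
Local Notation normc := (@Normc.normc R).

Lemma jacobian_ul i j :
  J (lshift n i) (lshift n j) = mu_u * L i j + (p i - 2 * u i - c * v i) *+ (i == j).
Proof. by rewrite /jacobianM block_mxEul !mxE. Qed.

Lemma jacobian_ur i j : J (lshift n i) (rshift n j) = - ((c * u i) *+ (i == j)).
Proof. by rewrite /jacobianM block_mxEur !mxE. Qed.

Lemma jacobian_dl i j : J (rshift n i) (lshift n j) = - ((b * v i) *+ (i == j)).
Proof. by rewrite /jacobianM block_mxEdl !mxE. Qed.

Lemma jacobian_dr i j :
  J (rshift n i) (rshift n j) = mu_v * L i j + (q i - b * u i - 2 * v i) *+ (i == j).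
Proof. by rewrite /jacobianM block_mxEdr !mxE. Qed.

Lemma scaled_connL_offdiag_ge0 (m d : R) i : 0 <= m ->
  forall j, j != i -> 0 <= m * L i j + d *+ (i == j).
Proof.
move=> m_ge0 j ji; rewrite eq_sym (negbTE ji) mulr0n addr0 connL_offdiag 1?eq_sym //.
by rewrite mulr_ge0 // A_offdiag_ge0 // eq_sym.
Qed.

Lemma sum_opp_deltaC (e : R) (y : 'I_n -> R[i]) i :
  \sum_j (- (e *+ (i == j)))%:C * y j = (- e)%:C * y i.
Proof.
rewrite -sum_delta; apply: eq_bigr => j _.
by rewrite -mulNrn rmorphMn.
Qed.

Lemma eigenvalue_comparison l : eigenvalue (map_mx (@real_complex R) J) l ->
  exists r t, comparison_subsolution (complex.Re l) r t.
Proof.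
rewrite -eigenvalue_trmx => /eigenvalueP [w w_eig w_neq0].
have row k : l * w 0 k = \sum_k' (J k k')%:C * w 0 k'.
  move/matrixP: w_eig => /(_ 0 k); rewrite !mxE => <-.
  by apply: eq_bigr => k' _; rewrite !mxE mulrC.
pose x i := w 0 (lshift n i); pose y i := w 0 (rshift n i).
have top i : l * x i = \sum_j (mu_u * L i j + (p i - 2 * u i - c * v i) *+ (i == j))%:C * x j
    + (- (c * u i))%:C * y i.
  rewrite /x row big_split_ord /= -sum_opp_deltaC.
  by congr (_ + _); apply: eq_bigr => j _; rewrite ?jacobian_ul ?jacobian_ur.
have bottom i : l * y i = \sum_j (mu_v * L i j + (q i - b * u i - 2 * v i) *+ (i == j))%:C * y j
    + (- (b * v i))%:C * x i.
  rewrite /y row big_split_ord /= -sum_opp_deltaC addrC.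
  by congr (_ + _); apply: eq_bigr => j _; rewrite ?jacobian_dl ?jacobian_dr.
exists (fun i => normc (x i)), (fun i => normc (y i)); split=> [i|i||i|i].
- exact: normc_ge0.
- exact: normc_ge0.
- have /existsP [k wk] : [exists k, w 0 k != 0].
    apply: contraT => /existsPn w0; rewrite -(negbTE w_neq0); apply/eqP/rowP => k.
    by rewrite mxE; apply/eqP; rewrite -[_ == _]negbK w0.
  case: (split_ordP k) wk => j -> wj; exists j; [left | right];
    by apply: contra wj => /eqP /Normc.eq0_normc /eqP.
- have := Re_mul_normc_le (scaled_connL_offdiag_ge0 _ (ltW mu_u_gt0)) (top i).
  by rewrite sum_scale_delta Normc.normcM normc_real normrN ger0_norm // mulr_ge0 ?ltW.
have := Re_mul_normc_le (scaled_connL_offdiag_ge0 _ (ltW mu_v_gt0)) (bottom i).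
by rewrite sum_scale_delta Normc.normcM normc_real normrN ger0_norm // mulr_ge0 ?ltW.
Qed.

Lemma proportional_eigenvalue0 (k : R) (i0 : 'I_n) : b * c = 1 -> 0 < k ->
  (forall i, u i = k * v i) -> eigenvalue (map_mx (@real_complex R) J) 0.
Proof.
move=> bc1 k_gt0 u_kv.
rewrite -(rmorph0 (@real_complex R)) eigenvalue_map -eigenvalue_trmx.
apply/eigenvalueP; exists (row_mx (\row_i (c * u i)) (\row_i (- u i))); last first.
  apply/eqP => /rowP /(_ (lshift n i0)); rewrite row_mxEl !mxE => /eqP.
  by rewrite mulf_eq0 !gt_eqF.
have trE x y : J^T x y = J y x by rewrite mxE.
rewrite scale0r; apply/rowP => kk; rewrite !mxE big_split_ord /=.
have Lc (f : 'I_n -> R) (e : R) i : \sum_j L i j * (e * f j) = e * \sum_j L i j * f j.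
  by rewrite mulr_sumr; apply: eq_bigr => j _; rewrite mulrCA.
case: (split_ordP kk) => i ->.
  under eq_bigr do rewrite trE jacobian_ul row_mxEl mxE mulrC.
  under [X in _ + X]eq_bigr do rewrite trE jacobian_ur row_mxEr mxE mulrC -mulNrn.
  rewrite sum_scale_delta sum_delta Lc.
  transitivity (c * (mu_u * (\sum_j L i j * u j) + u i * (p i - u i - c * v i))); first ring.
  by rewrite u_eq mulr0.
under eq_bigr do rewrite trE jacobian_dl row_mxEl mxE mulrC -mulNrn.
under [X in _ + X]eq_bigr do rewrite trE jacobian_dr row_mxEr mxE mulrC.
rewrite sum_scale_delta sum_delta.
rewrite (eq_bigr (fun j => L i j * (- k * v j))) => [|j _]; last by rewrite u_kv mulNr.
rewrite Lc; transitivity (- k * (mu_v * (\sum_j L i j * v j) + v i * (q i - b * u i - v i))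
    + k * v i ^+ 2 * (1 - b * c)).
  by rewrite (u_kv i); ring.
by rewrite v_eq bc1 subrr !mulr0 addr0.
Qed.

Lemma jacobian_spectral_bound (i0 : 'I_n) : exists s, [/\ is_spectral_bound J s, s <= 0 &
  s = 0 <-> b * c = 1 /\ exists2 k, 0 < k & forall i, u i = k * v i].
Proof.
have nn_gt0 : (0 < n + n)%N by rewrite addn_gt0; case: (n) i0 => [[]|].
have [z z_eig z_max] := eigenvalue_max_Re (map_mx (@real_complex R) J) nn_gt0.
have [r [t sub]] := eigenvalue_comparison z_eig.
have Re_le0 := comparison_rate_le0 sub.
exists (complex.Re z); split=> //; first by split; [exists z |].
split; first exact: neutral_comparison_proportional sub.
case=> bc1 [k k_gt0 u_kv]; apply/eqP; rewrite eq_le Re_le0.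
exact: z_max 0 (proportional_eigenvalue0 i0 bc1 k_gt0 u_kv).
Qed.

Lemma special_caseE (i0 : 'I_n) :
  (b * c = 1 /\ exists wu wv : 'I_n -> R, [/\ single_pos_equilibrium L mu_u p wu,
     single_pos_equilibrium L mu_v q wv & forall i, wu i = c * wv i]) <->
  (b * c = 1 /\ exists2 k, 0 < k & forall i, u i = k * v i).
Proof.
split=> [[bc1 [wu [wv [wu_eq wv_eq wu_wv]]]] | [bc1 [k k_gt0 u_kv]]]; split=> //.
  exact: special_case_proportional bc1 wu_eq wv_eq wu_wv i0.
exact: proportional_special_case bc1 k_gt0 u_kv.
Qed.

End TwoSpecies.

Unset Implicit Arguments.

Theorem theorem3p1 (R : realType) (n : nat) (A : 'M[R]_n) (b c mu_u mu_v : R)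
  (p q u v : 'I_n -> R) :
  (2 <= n)%N ->
  offdiag_nonneg A ->
  (* (A1) *)
  0 < b -> 0 < c -> b * c <= 1 ->
  (forall i, 0 < p i) -> (forall i, 0 < q i) ->
  (* (A2) *)
  irreducible_mx (connL A) ->
  (* (A3) *)
  cycle_balanced A ->
  0 < mu_u -> 0 < mu_v ->
  (forall i, 0 < u i) -> (forall i, 0 < v i) ->
  M_equilibrium (connL A) mu_u mu_v b c p q u v ->
  let J := jacobianM (connL A) mu_u mu_v b c p q u v in
  let special_case :=
    b * c = 1 /\
    exists wu wv : 'I_n -> R,
      [/\ single_pos_equilibrium (connL A) mu_u p wu,
          single_pos_equilibrium (connL A) mu_v q wv &
          forall i, wu i = c * wv i] in
  exists s : R, is_spectral_bound J s /\
    (special_case -> s = 0) /\ (~ special_case -> s < 0).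
Proof.
(* The positivity of [p] and [q] only matters for the existence of [(u, v)]. *)
move=> n_ge2 A_ge0 b_gt0 c_gt0 bc_le1 _ _ L_irr A_bal mu_u_gt0 mu_v_gt0 u_gt0 v_gt0 uv_eq
  J special.
pose i0 := Ordinal (ltnW n_ge2).
have [th th_gt0 th_sym] := balanced_symmetrizer A_ge0 L_irr A_bal i0.
have [s [s_bound s_le0 s0E]] := jacobian_spectral_bound A_ge0 th_gt0 th_sym L_irr
  b_gt0 c_gt0 bc_le1 mu_u_gt0 mu_v_gt0 u_gt0 v_gt0 uv_eq i0.
have specialE : special <-> s = 0.
  apply: iff_trans (iff_sym s0E).
  exact: special_caseE A_ge0 th_gt0 th_sym L_irr b_gt0 c_gt0 mu_u_gt0 u_gt0 v_gt0 uv_eq i0.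
exists s; split=> //; split=> [/specialE //|not_special].
by rewrite lt_neqAle s_le0 andbT; apply: contra_not_neq not_special => /specialE.
Qed.
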